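(* Identify the vertices of every ordered forest with their preorder traversal labels. Then: (a) For any ordered forest, the labels of a vertex together with all its descendants form a contiguous interval of integers. (b) Let $p\in(0,1]$, $m\in[n]$ and $F\in\mathcal{F}_{\mathrm{ord}}(n)$; let $F\langle m,n\rangle$ be the induced subgraph on the vertices with labels in $[m,n]$, an ordered forest with the inherited orderings, and let $G\in\mathcal{F}_{\mathrm{ord}}(n-m+1)$ be isomorphic to it. For any $G'\in\mathcal{F}_{\mathrm{ord}}(n-m+1)$, the probability that a random Ungar move applied to $F$ produces a forest $F'$ with $F'\langle m,n\rangle\cong G'$ equals the probability that a random Ungar move applied to $G$ produces $G'$. (c) Start from $\hat 1$ (the path on $n$ vertices in which each vertex $i<n$ has unique child $i+1$) and apply a sequence of moves, where at step $t=1,2,\dots$ a set $S_t\subseteq[n]$ of vertices is selected and the selected vertices are operated on in increasing order of label. For each vertex $i$ let $h_i$ be the smallest $t$ with $i\in S_t$. Let $k<l$ be vertices with $h_k>h_l$ and $h_l\ge h_i$ for all $i\in[k+1,l-1]$. Then after $h_l$ steps, $l$ is a child of $k$.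
   Context: An ordered forest is a finite forest of rooted trees with children of each vertex and the trees linearly ordered left to right; $\mathcal{F}_{\mathrm{ord}}(n)$ is the set of such forests on $n$ vertices up to isomorphism. Preorder traversal labels vertices $1,\dots,n$: trees left to right, each vertex before its subtrees, subtrees left to right. Operating on a vertex $v$: if $v$ is a leaf nothing changes; otherwise the rightmost child $v'$ of $v$ (with its subtree) is detached and attached to the parent $w$ of $v$ immediately right of $v$, or, if $v$ is a root, becomes a new tree immediately to the right of the tree of $v$; labels are preserved. A random Ungar move with parameter $p$ on a forest $F$ selects each vertex independently with probability $p$ and operates on the selected vertices in increasing order of label (this is the Ungarian Markov chain on the Tamari lattice realized on $\mathcal{F}_{\mathrm{ord}}(n)$). *)

From HB Require Import structures.
From mathcomp Require Import all_boot all_order all_algebra.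
Set Implicit Arguments. Unset Strict Implicit. Unset Printing Implicit Defensive.
Import Order.TTheory GRing.Theory Num.Theory.

(* Ordered (plane) trees and forests, represented up to isomorphism as rose
   trees: a tree is the ordered list of its children's subtrees; a forest is
   the ordered list of its trees.  Two ordered forests are isomorphic iff their
   representations are equal. *)
Inductive tree : Type := Node of seq tree.
Definition forest := seq tree.

Fixpoint tenc (t : tree) : GenTree.tree unit :=
  let: Node ts := t in GenTree.Node 0 (map tenc ts).
Fixpoint tdec (g : GenTree.tree unit) : tree :=
  match g with GenTree.Leaf _ => Node [::] | GenTree.Node _ gs => Node (map tdec gs) end.
Fixpoint tencK_ (t : tree) : tdec (tenc t) = t :=
  match t with Node ts => f_equal Node
    ((fix aux (l : seq tree) : map tdec (map tenc l) = l :=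
        match l with [::] => erefl | t' :: l' => f_equal2 cons (tencK_ t') (aux l') end) ts)
  end.
Lemma tencK : cancel tenc tdec. Proof. exact: tencK_. Qed.
HB.instance Definition _ := Countable.copy tree (can_type tencK).

Fixpoint tsize (t : tree) : nat := let: Node ts := t in (sumn (map tsize ts)).+1.
Definition fsize (F : forest) : nat := sumn (map tsize F).

(* Preorder labels (0-based): in a list of trees whose first vertex has label o,
   the i-th tree's root has label o + (sizes of the previous trees).
   [ocat g o ts] concatenates g o_i t_i, where o_i is the preorder label of the
   root of t_i. *)
Fixpoint ocat (A : Type) (g : nat -> tree -> seq A) (o : nat) (ts : seq tree) : seq A :=
  match ts with [::] => [::] | t :: ts' => g o t ++ ocat g (o + tsize t) ts' end.

(* parent/child edges (w, u) : u is a child of w, labels in preorder *)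
Fixpoint tedges (o : nat) (t : tree) {struct t} : seq (nat * nat) :=
  let: Node cs := t in
  [seq (o, c) | c <- ocat (fun o' _ => [:: o']) o.+1 cs] ++ ocat tedges o.+1 cs.
Definition fedges (F : forest) : seq (nat * nat) := ocat tedges 0 F.
Definition is_child (F : forest) (w u : nat) : bool := (w, u) \in fedges F.

Inductive desc (F : forest) (v : nat) : nat -> Prop :=
| desc_refl : desc F v v
| desc_step w u : desc F v w -> is_child F w u -> desc F v u.

(* A tree rooted at v
   is replaced by the two trees: itself without its rightmost child subtree,
   followed by that subtree.  Since this happens inside the children list of
   the parent of v (or the forest, if v is a root), the detached subtree lands
   immediately to the right of v.  Preorder labels are preserved. *)
Definition detach_last (t : tree) : seq tree :=
  let: Node cs := t in
  if rev cs is c :: rcs then [:: Node (rev rcs); c] else [:: t].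

Fixpoint op_tree (v o : nat) (t : tree) {struct t} : seq tree :=
  let: Node cs := t in
  if v == o then detach_last t else [:: Node (ocat (op_tree v) o.+1 cs)].
Definition op (v : nat) (F : forest) : forest := ocat (op_tree v) 0 F.

Definition ungar (n : nat) (S : {set 'I_n}) (F : forest) : forest :=
  foldl (fun F v => op v F) F (sort leq [seq val i | i <- enum S]).

(* probability that a random Ungar move with parameter p (each of the n
   vertices selected independently with probability p) applied to F yields a
   forest satisfying P *)
Definition ungar_prob (R : pzRingType) (n : nat) (p : R) (F : forest)
    (P : pred forest) : R :=
  (\sum_(S : {set 'I_n}) p ^+ #|S| * (1 - p) ^+ (n - #|S|) * (P (ungar S F))%:R)%R.

(* Induced subforest on the vertices with 0-based labels >= k, i.e. 1-based
   labels in [k+1, n]: vertices whose parent is removed become roots, order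
   inherited. *)
Fixpoint restr_tree (k o : nat) (t : tree) {struct t} : seq tree :=
  let: Node cs := t in if k <= o then [:: t] else ocat (restr_tree k) o.+1 cs.
Definition restr (k : nat) (F : forest) : forest := ocat (restr_tree k) 0 F.

Fixpoint chain (k : nat) : tree :=
  match k with 0 => Node [::] | k'.+1 => Node [:: chain k'] end.
Definition hat1 (n : nat) : forest := if n is n'.+1 then [:: chain n'] else [::].

(* h_i for a finite sequence of selection sets S_1, S_2, ... (given as a list):
   the smallest t >= 1 with i \in S_t; equal to (size Ss).+1 (acting as
   "infinity" relative to every step of the list) if i is never selected. *)
Definition hit (n : nat) (Ss : seq {set 'I_n}) (i : 'I_n) : nat :=
  (find (fun S : {set 'I_n} => i \in S) Ss).+1.

Definition run (n : nat) (Ss : seq {set 'I_n}) (F : forest) : forest :=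
  foldl (fun F S => ungar S F) F Ss.

From Pilot Require Import Defs.
From HB Require Import structures.
From mathcomp Require Import all_boot all_order all_algebra.
From mathcomp Require Import zify.
Import Order.TTheory GRing.Theory Num.Theory.
(* Re-import so that [tsize] refers to tree sizes rather than tuple sizes. *)
Import Defs.
Set Implicit Arguments. Unset Strict Implicit. Unset Printing Implicit Defensive.

(* A forest is described by the preorder sequence of its subtree sizes
   [subsize F v]: the descendants of [v] are the labels in
   [v, v + subsize F v), and [u] is a child of [w] iff [u] lies in that
   interval and no vertex strictly between [w] and [u] has an interval
   reaching [u].  This gives (a).

   Operating on [v] changes only the entry of [v], trimming its interval so
   that it ends at the rightmost child of [v].  On the path every interval
   reaches the last label, and a vertex keeps such an interval until it is
   operated on.  Hence in (c) the vertex [k], never selected, still covers [l],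
   while every vertex of (k, l) is operated on before [l] (earlier step, or
   same step and smaller label) and then ends at or before [l].

   For (b), operating on a label [v < k] does not change the induced subforest
   on the labels [>= k], and operating on [v >= k] commutes with restriction as
   operating on [v - k].  So restricting after an Ungar move is an Ungar move
   on the restriction, selected by the part of the selection above [k], which
   is again an independent selection with parameter [p]. *)

Lemma tsizeE cs : tsize (Node cs) = (fsize cs).+1.
Proof. by []. Qed.

Lemma tsize_gt0 t : 0 < tsize t.
Proof. by case: t. Qed.

Lemma fsize_cons t F : fsize (t :: F) = tsize t + fsize F.
Proof. by []. Qed.

Lemma fsize_cat F1 F2 : fsize (F1 ++ F2) = fsize F1 + fsize F2.
Proof. by rewrite /fsize map_cat sumn_cat. Qed.

Lemma fsize1 t : fsize [:: t] = tsize t.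
Proof. by rewrite /fsize /= addn0. Qed.

Lemma fsize_rcons F t : fsize (rcons F t) = fsize F + tsize t.
Proof. by rewrite -cats1 fsize_cat fsize1. Qed.

Lemma forest_ind (P : forest -> Prop) : P [::] ->
  (forall cs F, P cs -> P F -> P (Node cs :: F)) -> forall F, P F.
Proof.
move=> P0 PS F; have [n] := ubnP (fsize F); elim: n F => // n IH [|[cs] F] //.
rewrite fsize_cons tsizeE => ltFn; apply: PS; apply: IH; lia.
Qed.

Lemma tree_ind_in (P : tree -> Prop) :
  (forall cs, (forall c, c \in cs -> P c) -> P (Node cs)) -> forall t, P t.
Proof.
move=> PN t; have [n] := ubnP (tsize t); elim: n t => // n IH [cs] ltcn.
apply: PN => c c_cs; apply: IH.
suff : tsize c <= fsize cs by rewrite tsizeE in ltcn; lia.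
by case/splitPr: c_cs {ltcn} => cs1 cs2; rewrite fsize_cat fsize_cons; lia.
Qed.

Lemma ocat1 A (g : nat -> tree -> seq A) o t : ocat g o [:: t] = g o t.
Proof. exact: cats0. Qed.

Lemma ocat_cat A (g : nat -> tree -> seq A) o F1 F2 :
  ocat g o (F1 ++ F2) = ocat g o F1 ++ ocat g (o + fsize F1) F2.
Proof.
elim: F1 o => [|t F1 IH] o /=; first by rewrite addn0.
by rewrite IH -catA fsize_cons addnA.
Qed.

Lemma ocat_id o F : ocat (fun _ t => [:: t]) o F = F.
Proof. by elim: F o => [|t F IH] o //=; rewrite IH. Qed.

Lemma ocat_const A (g : tree -> seq A) o1 o2 F :
  ocat (fun _ t => g t) o1 F = ocat (fun _ t => g t) o2 F.
Proof. by elim: F o1 o2 => [|t F IH] o1 o2 //=; rewrite (IH _ (o2 + tsize t)). Qed.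

Lemma eq_in_ocat A (g1 g2 : nat -> tree -> seq A) o F :
  (forall o' t, t \in F -> o <= o' -> o' + tsize t <= o + fsize F ->
     g1 o' t = g2 o' t) ->
  ocat g1 o F = ocat g2 o F.
Proof.
elim: F o => [|t F IH] o //= eq_g; rewrite fsize_cons in eq_g.
rewrite eq_g ?mem_head //; last lia.
congr (_ ++ _); apply: IH => o' t' t'F le_o' le_o't'.
by apply: eq_g; rewrite ?inE ?t'F ?orbT //; lia.
Qed.

Lemma ocat_shift A B (g1 : nat -> tree -> seq A) (g2 : nat -> tree -> seq B)
    (f : A -> B) d o F :
  (forall o t, t \in F -> g2 (o + d) t = map f (g1 o t)) ->
  ocat g2 (o + d) F = map f (ocat g1 o F).
Proof.
elim: F o => [|t F IH] o //= eq_g.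
rewrite map_cat eq_g ?mem_head // -IH; first by rewrite addnAC.
by move=> o' t' t'F; apply: eq_g; rewrite inE t'F orbT.
Qed.

Lemma fsize_ocat (h : nat -> tree -> forest) (f : nat -> nat) o F :
  (forall o t, t \in F -> f o + fsize (h o t) = f (o + tsize t)) ->
  f o + fsize (ocat h o F) = f (o + fsize F).
Proof.
elim: F o => [|t F IH] o /= fh; first by rewrite !addn0.
rewrite fsize_cat addnA fh ?mem_head // IH ?fsize_cons ?addnA // => o' t' t'F.
by apply: fh; rewrite inE t'F orbT.
Qed.

Lemma ocat_ocat A (g : nat -> tree -> seq A) (h : nat -> tree -> forest)
    (f : nat -> nat) o F :
  (forall o t, t \in F -> f o + fsize (h o t) = f (o + tsize t)) ->
  ocat g (f o) (ocat h o F) = ocat (fun o t => ocat g (f o) (h o t)) o F.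
Proof.
elim: F o => [|t F IH] o //= fh.
rewrite ocat_cat fh ?mem_head // IH // => o' t' t'F.
by apply: fh; rewrite inE t'F orbT.
Qed.

(** * Subtree sizes in preorder *)

Fixpoint tsizes (t : tree) : seq nat :=
  let: Node cs := t in tsize t :: ocat (fun _ c => tsizes c) 0 cs.
Definition fsizes (F : forest) : seq nat := ocat (fun _ t => tsizes t) 0 F.

(* The size of the subtree rooted at label [v]; it is 0 when [fsize F <= v]. *)
Definition subsize (F : forest) (v : nat) : nat := nth 0 (fsizes F) v.

Lemma tsizesE cs : tsizes (Node cs) = (fsize cs).+1 :: fsizes cs.
Proof. by []. Qed.

Lemma fsizes_cons t F : fsizes (t :: F) = tsizes t ++ fsizes F.
Proof. by rewrite /fsizes /= (ocat_const _ _ 0). Qed.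

Lemma fsizes_cat F1 F2 : fsizes (F1 ++ F2) = fsizes F1 ++ fsizes F2.
Proof. by elim: F1 => [|t F1 IH] //=; rewrite !fsizes_cons IH catA. Qed.

Lemma size_fsizes F : size (fsizes F) = fsize F.
Proof.
elim/forest_ind: F => [|cs F IHcs IHF] //.
by rewrite fsizes_cons size_cat tsizesE /= IHcs IHF.
Qed.

Lemma subsize_default F v : fsize F <= v -> subsize F v = 0.
Proof. by move=> Fv; rewrite /subsize nth_default // size_fsizes. Qed.

Lemma subsize_root cs F : subsize (Node cs :: F) 0 = (fsize cs).+1.
Proof. by []. Qed.

Lemma subsize_first cs F v :
  0 < v <= fsize cs -> subsize (Node cs :: F) v = subsize cs v.-1.
Proof.
case: v => // v /= le_v; rewrite /subsize fsizes_cons tsizesE /=.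
by rewrite nth_cat size_fsizes ifT.
Qed.

Lemma subsize_rest cs F v :
  (fsize cs).+1 <= v -> subsize (Node cs :: F) v = subsize F (v - (fsize cs).+1).
Proof.
case: v => // v /= le_v; rewrite /subsize fsizes_cons tsizesE /=.
by rewrite nth_cat size_fsizes ltnNge -ltnS le_v.
Qed.

Lemma subsize_nested F v : v < fsize F ->
  [/\ 0 < subsize F v, v + subsize F v <= fsize F &
      forall w, v < w < v + subsize F v -> w + subsize F w <= v + subsize F v].
Proof.
elim/forest_ind: F v => [|cs F IHcs IHF] v //.
rewrite fsize_cons tsizeE => lt_v.
have [->|v_gt0] := posnP v.
  rewrite subsize_root; split=> //; first lia.
  move=> w lt_w; rewrite subsize_first; last lia.
  have [_ + _] := IHcs w.-1 ltac:(lia); lia.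
have [le_v_cs|lt_cs_v] := leqP v (fsize cs).
  rewrite subsize_first; last lia.
  have [pos bnd nest] := IHcs v.-1 ltac:(lia).
  split=> [//||w lt_w]; first lia.
  rewrite subsize_first; last lia.
  have := nest w.-1 ltac:(lia); lia.
rewrite subsize_rest //.
have [pos bnd nest] := IHF (v - (fsize cs).+1) ltac:(lia).
split=> [//||w lt_w]; first lia.
rewrite subsize_rest; last lia.
have := nest (w - (fsize cs).+1) ltac:(lia); lia.
Qed.

Definition roots (F : forest) : seq nat := ocat (fun o _ => [:: o]) 0 F.

Lemma roots_cons t F : roots (t :: F) = 0 :: map (addn (tsize t)) (roots F).
Proof.
congr (_ :: _); rewrite -[tsize t]add0n.
by apply: ocat_shift => o t' _; rewrite addnC.
Qed.

Lemma mem_roots F u :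
  (u \in roots F) <-> u < fsize F /\ forall w, w < u -> w + subsize F w <= u.
Proof.
elim/forest_ind: F u => [|cs F IHcs IHF] u; first by split=> // -[].
rewrite roots_cons inE fsize_cons tsizeE; split.
  case/orP=> [/eqP ->|/mapP [r /IHF [lt_r r_root] ->]]; first by split=> //; lia.
  split=> [|w lt_w]; first lia.
  have [->|w_gt0] := posnP w; first by rewrite subsize_root; lia.
  have [le_w_cs|lt_cs_w] := leqP w (fsize cs).
    rewrite subsize_first; last lia.
    have [_ + _] := subsize_nested (F := cs) (v := w.-1) ltac:(lia); lia.
  rewrite subsize_rest //; have := r_root (w - (fsize cs).+1) ltac:(lia); lia.
case=> lt_u u_root; have [->//|u_gt0] := posnP u.
have [le_u_cs|lt_cs_u] := leqP u (fsize cs).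
  by have := u_root 0 u_gt0; rewrite subsize_root; lia.
apply/orP; right; apply/mapP; exists (u - (fsize cs).+1); last lia.
apply/IHF; split=> [|w lt_w]; first lia.
have := u_root (w + (fsize cs).+1) ltac:(lia).
by rewrite subsize_rest ?addnK; lia.
Qed.

Definition shift_edge (d : nat) (e : nat * nat) : nat * nat := (e.1 + d, e.2 + d).

Lemma mem_map_shift_edge d E w u :
  ((w, u) \in map (shift_edge d) E) = [&& d <= w, d <= u & (w - d, u - d) \in E].
Proof.
apply/mapP/and3P => [[[w' u'] wuE [-> ->]]|[le_w le_u wuE]].
  by rewrite !leq_addl !addnK.
by exists (w - d, u - d); rewrite // /shift_edge /= !subnK.
Qed.

Lemma tedges_shift d o t : tedges (o + d) t = map (shift_edge d) (tedges o t).
Proof.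
elim/tree_ind_in: t o => cs IH o /=; rewrite map_cat -addSn; congr (_ ++ _).
  rewrite (@ocat_shift _ _ (fun o _ => [:: o]) _ (addn^~ d)) //.
  by elim: (ocat _ o.+1 cs) => //= x s ->.
by apply: ocat_shift => o' t t_cs; rewrite IH.
Qed.

Lemma fedges_cons cs F :
  fedges (Node cs :: F) =
  [seq (0, r.+1) | r <- roots cs] ++ map (shift_edge 1) (fedges cs)
  ++ map (shift_edge (fsize cs).+1) (fedges F).
Proof.
rewrite /fedges /= -catA -[1]add0n -[(fsize cs).+1]add0n; congr (_ ++ _ ++ _).
- rewrite (@ocat_shift _ _ (fun o _ => [:: o]) _ S) => [|o t _]; last first.
    by rewrite addn1.
  by rewrite /roots; elim: (ocat _ 0 cs) => //= x s ->.
- by apply: ocat_shift => o t _; rewrite tedges_shift.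
- by apply: ocat_shift => o t _; rewrite tedges_shift.
Qed.

Lemma root_childP cs F u :
  (0 < u) && (u.-1 \in roots cs) <->
  0 < u < (fsize cs).+1 /\ forall w', 0 < w' < u -> w' + subsize (Node cs :: F) w' <= u.
Proof.
split=> [/andP [u_gt0 /mem_roots [lt_u u_root]]|[lt_u u_below]].
  split=> [|w' lt_w']; first lia.
  rewrite subsize_first; last lia.
  by have := u_root w'.-1 ltac:(lia); lia.
rewrite (_ : 0 < u) //=; last lia.
apply/mem_roots; split=> [|w' lt_w']; first lia.
by have := u_below w'.+1 ltac:(lia); rewrite subsize_first /=; lia.
Qed.

Lemma is_childP F w u :
  is_child F w u <->
  w < u < w + subsize F w /\ forall w', w < w' < u -> w' + subsize F w' <= u.
Proof.
elim/forest_ind: F w u => [|cs F IHcs IHF] w u.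
  by rewrite /is_child /subsize nth_nil; split=> // -[]; lia.
rewrite /is_child fedges_cons !mem_cat !mem_map_shift_edge.
have root_edge : ((w, u) \in [seq (0, r.+1) | r <- roots cs]) =
    (w == 0) && (0 < u) && (u.-1 \in roots cs).
  apply/mapP/idP => [[r r_root [-> ->]] //|/andP [/andP [/eqP -> u_gt0] u_root]].
  by exists u.-1; rewrite ?prednK.
rewrite root_edge; have [->|w_gt0] := posnP w.
  by rewrite /= orbF subsize_root; apply: root_childP.
have [le_w_cs|lt_cs_w] := leqP w (fsize cs).
  rewrite /= orbF subsize_first; last lia.
  have [_ bnd_w _] := subsize_nested (F := cs) (v := w.-1) ltac:(lia).
  rewrite subn1; split.
    case/andP=> u_gt0 /IHcs [lt_u u_below]; split=> [|w' lt_w']; first lia.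
    rewrite subsize_first; last lia.
    have := u_below w'.-1 ltac:(lia); lia.
  case=> lt_u u_below; rewrite (_ : 0 < u) /=; last lia.
  apply/IHcs; split=> [|w' lt_w']; first lia.
  by have := u_below w'.+1 ltac:(lia); rewrite subsize_first /=; lia.
rewrite [(0 < u) && _](_ : _ = false) /=; last first.
  apply/negP => /andP [_ /IHcs [lt_u _]].
  by have := @subsize_default cs (w - 1) ltac:(lia); lia.
rewrite subsize_rest //; split.
  case/andP=> le_u /IHF [lt_u u_below]; split=> [|w' lt_w']; first lia.
  rewrite subsize_rest; last lia.
  have := u_below (w' - (fsize cs).+1) ltac:(lia); lia.
case=> lt_u u_below; rewrite (_ : fsize cs < u) /=; last lia.
apply/IHF; split=> [|w' lt_w']; first lia.
have := u_below (w' + (fsize cs).+1) ltac:(lia).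
by rewrite subsize_rest ?addnK; lia.
Qed.

Lemma desc_subsize F v u :
  v < fsize F -> desc F v u <-> v <= u < v + subsize F v.
Proof.
move=> lt_v; have [pos _ nest] := subsize_nested lt_v; split.
  elim=> [|w u' _ IH /is_childP [lt_u' _]]; first lia.
  have [eq_wv|ne_wv] := eqVneq w v; first by subst w; lia.
  have := nest w ltac:(lia); lia.
elim/ltn_ind: u => u IH u_in; have [->|ne_uv] := eqVneq u v; first exact: desc_refl.
(* the parent of [u] is the last vertex before [u] whose subtree contains [u] *)
pose covers w := (v <= w < u) && (u < w + subsize F w).
have ex_cover : exists w, covers w by exists v; apply/andP; split; lia.
have cover_le w : covers w -> w <= u by case/andP => /andP [_ /ltnW].
have [w /andP [w_lt u_in_w] w_max] := ex_maxnP ex_cover cover_le.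
apply: (@desc_step _ _ w); first by apply: IH; lia.
apply/is_childP; split=> [|w' lt_w']; first lia.
rewrite leqNgt; apply/negP => u_in_w'.
by have := w_max w' ltac:(apply/andP; split; lia); lia.
Qed.

(** * Restriction to the labels [>= k] *)

Lemma op_tree_shift v o d t : op_tree (v + d) (o + d) t = op_tree v o t.
Proof.
elim/tree_ind_in: t v o => cs IH v o /=; rewrite eqn_add2r.
case: eqP => // _; congr [:: Node _].
rewrite -addSn (@ocat_shift _ _ (op_tree v) _ id) ?map_id // => o' t t_cs.
by rewrite map_id IH.
Qed.

Lemma op_tree_out v o t : v < o \/ o + tsize t <= v -> op_tree v o t = [:: t].
Proof.
elim/tree_ind_in: t o => cs IH o; rewrite tsizeE => v_out /=.
rewrite ifN_eq; last by apply/eqP; lia.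
congr [:: Node _]; rewrite -[RHS](ocat_id o.+1).
by apply: eq_in_ocat => o' t t_cs le_o' le_o't; apply: IH => //; lia.
Qed.

Lemma fsize_op_tree v o t : fsize (op_tree v o t) = tsize t.
Proof.
elim/tree_ind_in: t o => cs IH o; rewrite tsizeE /=; case: eqP => _.
  case/lastP: cs {IH} => [|cs c] //=.
  by rewrite rev_rcons /= revK fsize_cons fsize1 tsizeE fsize_rcons addSn.
rewrite fsize1 tsizeE; congr _.+1; apply/(@addnI o.+1).
by apply: (@fsize_ocat _ id) => o' t t_cs; rewrite IH.
Qed.

Lemma fsize_op v F : fsize (op v F) = fsize F.
Proof. by apply: (@fsize_ocat _ id 0) => o t _; rewrite fsize_op_tree. Qed.

Lemma fsize_restr_tree k o t :
  (o - k) + fsize (restr_tree k o t) = o + tsize t - k.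
Proof.
elim/tree_ind_in: t o => cs IH o; rewrite tsizeE /=; case: leqP => le_ko.
  by rewrite fsize1 tsizeE; lia.
have := @fsize_ocat (restr_tree k) (subn^~ k) o.+1 cs.
by move=> /(_ (fun o' t t_cs => IH t t_cs o')); lia.
Qed.

Lemma ocat_restr_tree_ge k o F : k <= o -> ocat (restr_tree k) o F = F.
Proof.
move=> le_ko; rewrite -[RHS](ocat_id o).
by apply: eq_in_ocat => o' [cs] _ le_o' _ /=; rewrite ifT //; lia.
Qed.

Lemma restr_op_tree k v o t :
  ocat (restr_tree k) o (op_tree v o t) =
  if v < k then restr_tree k o t
  else ocat (op_tree (v - k)) (o - k) (restr_tree k o t).
Proof.
elim/tree_ind_in: t o => cs IH o; have [le_ko|lt_ok] := leqP k o.
  have -> : restr_tree k o (Node cs) = [:: Node cs] by rewrite /= le_ko.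
  rewrite ocat_restr_tree_ge // ocat1; case: ltnP => le_kv.
    by apply: op_tree_out; left; lia.
  by rewrite -[in LHS](subnK le_kv) -[in LHS](subnK le_ko) op_tree_shift.
have le_ko_F : (k <= o) = false by rewrite leqNgt lt_ok.
rewrite /= le_ko_F /=; case: eqP => [->|ne_vo].
  rewrite lt_ok; case/lastP: cs {IH} => [|cs c] /=; first by rewrite le_ko_F.
  rewrite rev_rcons /= revK le_ko_F /= cats0 -cats1 ocat_cat /=.
  by rewrite cats0 addnS.
rewrite ocat1 /= le_ko_F /=.
rewrite (@ocat_ocat _ _ _ id) => [|o' t _]; last by rewrite fsize_op_tree.
case: ltnP => le_kv.
  by apply: eq_in_ocat => o' t t_cs _ _; rewrite IH // le_kv.
rewrite [o - k](_ : _ = o.+1 - k); last lia.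
rewrite (@ocat_ocat _ _ _ (subn^~ k)) => [|o' t _]; last by rewrite fsize_restr_tree.
by apply: eq_in_ocat => o' t t_cs _ _; rewrite IH // ltnNge le_kv.
Qed.

Lemma restr_op k v F :
  restr k (op v F) = if v < k then restr k F else op (v - k) (restr k F).
Proof.
rewrite /restr /op (@ocat_ocat _ _ _ id) => [|o t _]; last by rewrite fsize_op_tree.
case: ltnP => le_kv.
  by apply: eq_in_ocat => o t _ _ _; rewrite restr_op_tree le_kv.
rewrite -(sub0n k) (@ocat_ocat _ _ _ (subn^~ k)) => [|o t _]; last first.
  by rewrite fsize_restr_tree.
by apply: eq_in_ocat => o t _ _ _; rewrite restr_op_tree ltnNge le_kv.
Qed.

Definition op_seq (L : seq nat) (F : forest) : forest := foldl (fun F v => op v F) F L.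

Lemma restr_op_seq k F L :
  restr k (op_seq L F) = op_seq [seq v - k | v <- L & k <= v] (restr k F).
Proof.
elim: L F => [|v L IH] F //=.
by rewrite IH restr_op; case: ltnP => le_kv /=; rewrite ?le_kv // leqNgt le_kv.
Qed.

Definition labels n (S : {set 'I_n}) : seq nat := sort leq [seq val i | i <- enum S].

Lemma ungarE n (S : {set 'I_n}) F : ungar S F = op_seq (labels S) F.
Proof. by []. Qed.

Lemma mem_labels n (S : {set 'I_n}) (i : 'I_n) : (val i \in labels S) = (i \in S).
Proof. by rewrite mem_sort (mem_map val_inj) mem_enum. Qed.

Lemma labelsP n (S : {set 'I_n}) x :
  reflect (exists2 i : 'I_n, i \in S & x = val i) (x \in labels S).
Proof.
apply: (iffP idP) => [|[i iS ->]]; last by rewrite mem_labels.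
by rewrite mem_sort => /mapP [i]; rewrite mem_enum; exists i.
Qed.

Lemma sorted_labels n (S : {set 'I_n}) : sorted leq (labels S).
Proof. exact: (sort_sorted leq_total). Qed.

Lemma uniq_labels n (S : {set 'I_n}) : uniq (labels S).
Proof. by rewrite sort_uniq (map_inj_uniq val_inj) enum_uniq. Qed.

Lemma labels_preimset_rshift k j (S : {set 'I_(k + j)}) :
  [seq x - k | x <- labels S & k <= x] = labels (@rshift k j @^-1: S).
Proof.
apply: (sorted_eq leq_trans anti_leq); last apply: uniq_perm.
- rewrite sorted_map; apply: (@sub_sorted _ leq) => [x y|]; first exact: leq_sub2r.
  exact: (sorted_filter leq_trans _ (sorted_labels S)).
- exact: sorted_labels.
- rewrite map_inj_in_uniq ?filter_uniq ?uniq_labels // => x y.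
  by rewrite !mem_filter => /andP [le_kx _] /andP [le_ky _]; lia.
- exact: uniq_labels.
move=> y; apply/mapP/labelsP => [[x]|[i]]; last first.
  rewrite inE => iS ->; exists (val (rshift k i)); last by rewrite /= addKn.
  by rewrite mem_filter mem_labels /= leq_addr.
rewrite mem_filter => /andP [le_kx /labelsP [i iS eq_xi]] ->; subst x.
have lt_ij : i - k < j by move: le_kx (ltn_ord i) => /=; lia.
exists (Ordinal lt_ij); rewrite // inE.
suff -> : rshift k (Ordinal lt_ij) = i by [].
by apply: val_inj; rewrite /= subnKC.
Qed.

Lemma restr_ungar k j (S : {set 'I_(k + j)}) F :
  restr k (ungar S F) = ungar (@rshift k j @^-1: S) (restr k F).
Proof. by rewrite !ungarE restr_op_seq labels_preimset_rshift. Qed.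

Section IndependentSelection.
Variables (R : comPzRingType) (p : R).
Local Open Scope ring_scope.

Definition bern (b : bool) : R := if b then p else 1 - p.

Lemma bern_weightE n (S : {set 'I_n}) :
  p ^+ #|S| * (1 - p) ^+ (n - #|S|) = \prod_(i : 'I_n) bern (i \in S).
Proof.
symmetry; rewrite (bigID (mem S)) /=.
rewrite [X in X * _](eq_bigr (fun=> p)) => [|i /= -> //].
rewrite [X in _ * X](eq_bigr (fun=> 1 - p)) => [|i /negbTE -> //].
rewrite !prodr_const; congr (_ * _ ^+ _).
apply/eqP; rewrite -(eqn_add2l #|S|) cardC card_ord subnKC //.
by have := max_card (mem S); rewrite card_ord.
Qed.

Lemma sum_prod_bern n : \sum_(S : {set 'I_n}) \prod_(i : 'I_n) bern (i \in S) = 1.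
Proof.
transitivity (\prod_(i : 'I_n) \sum_(b : bool) bern b); last first.
  by rewrite big1 // => i _; rewrite big_bool /= addrC subrK.
rewrite bigA_distr_bigA (reindex (fun S : {set 'I_n} => [ffun i => i \in S])) /=.
  by apply: eq_bigr => S _; apply: eq_bigr => i _; rewrite ffunE.
exists (fun f : {ffun 'I_n -> bool} => [set i | f i]) => [S _|f _].
  by apply/setP => i; rewrite inE ffunE.
by apply/ffunP => i; rewrite ffunE inE.
Qed.

Definition join_set k j (A : {set 'I_k}) (B : {set 'I_j}) : {set 'I_(k + j)} :=
  [set x | match split x with inl a => a \in A | inr b => b \in B end].

Lemma lshift_join_set k j A B (a : 'I_k) : (lshift j a \in join_set A B) = (a \in A).
Proof. by rewrite inE -[lshift j a]/(unsplit (inl a)) unsplitK. Qed.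

Lemma rshift_join_set k j A B (b : 'I_j) : (rshift k b \in join_set A B) = (b \in B).
Proof. by rewrite inE -[rshift k b]/(unsplit (inr b)) unsplitK. Qed.

Lemma join_setK k j (S : {set 'I_(k + j)}) :
  join_set [set a | lshift j a \in S] (@rshift k j @^-1: S) = S.
Proof.
apply/setP => x; rewrite !inE.
by case: splitP => y eq_xy; rewrite inE; congr (_ \in S); apply: val_inj.
Qed.

(* Under independent selection, the part of the selection above [k] is again
   an independent selection. *)
Lemma sum_bern_preimset_rshift k j (f : {set 'I_j} -> R) :
  \sum_(S : {set 'I_(k + j)})
     p ^+ #|S| * (1 - p) ^+ (k + j - #|S|) * f (@rshift k j @^-1: S)
  = \sum_(T : {set 'I_j}) p ^+ #|T| * (1 - p) ^+ (j - #|T|) * f T.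
Proof.
pose w (S : {set 'I_(k + j)}) :=
  p ^+ #|S| * (1 - p) ^+ (k + j - #|S|) * f (@rshift k j @^-1: S).
rewrite (reindex (fun AB => join_set AB.1 AB.2)) /=; last first.
  pose split_set (S : {set 'I_(k + j)}) :=
    ([set a | lshift j a \in S], @rshift k j @^-1: S).
  exists split_set => [[A B] _|S _]; last exact: join_setK.
  by congr (_, _); apply/setP => x; rewrite inE ?lshift_join_set ?rshift_join_set.
rewrite -(pair_bigA _ (fun A B => w (join_set A B))) /=.
under eq_bigr => A _.
  under eq_bigr => B _.
    rewrite /w bern_weightE big_split_ord /=.
    under eq_bigr => i _ do rewrite lshift_join_set.
    under [X in _ * X * _]eq_bigr => i _ do rewrite rshift_join_set.
    have -> : @rshift k j @^-1: join_set A B = B.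
      by apply/setP => x; rewrite inE rshift_join_set.
    rewrite -mulrA.
  over.
  rewrite -big_distrr /=.
over.
rewrite /= -big_distrl /= sum_prod_bern mul1r.
by apply: eq_bigr => T _; rewrite bern_weightE.
Qed.

End IndependentSelection.

Lemma ungar_prob_restr (R : comPzRingType) (p : R) k j F (P : pred forest) :
  ungar_prob (k + j) p F (fun F' => P (restr k F')) = ungar_prob j p (restr k F) P.
Proof.
rewrite /ungar_prob; under eq_bigr => S _ do rewrite /= restr_ungar.
exact: sum_bern_preimset_rshift.
Qed.

(** * Operating on a vertex *)

Lemma ocat_op_tree_out v o F : v < o -> ocat (op_tree v) o F = F.
Proof.
move=> lt_vo; rewrite -[RHS](ocat_id o).
by apply: eq_in_ocat => o' t _ le_o' _; apply: op_tree_out; left; lia.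
Qed.

Lemma ocat_op_tree_shift v d F : ocat (op_tree (v + d)) d F = op v F.
Proof.
rewrite -[d in ocat _ d]add0n (@ocat_shift _ _ (op_tree v) _ id) ?map_id // => o t _.
by rewrite op_tree_shift map_id.
Qed.

Lemma op_cons_root cs F : op 0 (Node cs :: F) = detach_last (Node cs) ++ F.
Proof. by rewrite /op /= ocat_op_tree_out. Qed.

Lemma op_cons_first v cs F : 0 < v <= fsize cs ->
  op v (Node cs :: F) = Node (op v.-1 cs) :: F.
Proof.
move=> v_in; rewrite /op /= ifN_eq; last by apply/eqP; lia.
rewrite -/(fsize cs) [ocat _ _ F]ocat_op_tree_out; last lia.
have := ocat_op_tree_shift v.-1 1 cs; rewrite addn1 prednK; last lia.
by move=> ->.
Qed.

Lemma op_cons_rest v cs F : fsize cs < v ->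
  op v (Node cs :: F) = Node cs :: op (v - (fsize cs).+1) F.
Proof.
move=> lt_cs_v; rewrite /op /= -/(op_tree v 0 (Node cs)) op_tree_out /=; last by right.
have := ocat_op_tree_shift (v - (fsize cs).+1) (fsize cs).+1 F; rewrite subnK //.
by move=> ->.
Qed.

(* The [l] of the last clause are the vertices on the rightmost path below [v];
   the first of them is the rightmost child of [v], where the new interval of
   [v] has to end. *)
Definition trimmed_at (v : nat) (F F' : forest) : Prop :=
  [/\ forall u, u != v -> subsize F' u = subsize F u,
      subsize F' v <= subsize F v &
      forall l, v < l < v + subsize F v -> v + subsize F v <= l + subsize F l ->
        v + subsize F' v <= l].

Lemma trimmed_at_root cs F : trimmed_at 0 (Node cs :: F) (detach_last (Node cs) ++ F).
Proof.
case/lastP: cs => [|cs c] /=.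
  by split=> // l; rewrite subsize_root /fsize /=; lia.
rewrite rev_rcons /= revK.
have other u :
  u != 0 -> subsize [:: Node cs, c & F] u = subsize (Node (rcons cs c) :: F) u.
  case: u => // u _; rewrite /subsize !fsizes_cons !tsizesE -cats1 fsizes_cat.
  by rewrite fsizes_cons /= catA cats0.
split=> [//||l]; rewrite !subsize_root fsize_rcons; first lia.
move=> lt_l; rewrite -other; last lia.
have [le_l_cs|//] := leqP l (fsize cs).
rewrite subsize_first; last lia.
have [_ + _] := subsize_nested (F := cs) (v := l.-1) ltac:(lia).
by have := tsize_gt0 c; lia.
Qed.

Lemma trimmed_at_first v cs cs' F : v < fsize cs -> fsize cs' = fsize cs ->
  trimmed_at v cs cs' -> trimmed_at v.+1 (Node cs :: F) (Node cs' :: F).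
Proof.
move=> lt_v eq_size [other shrink trim]; split.
- move=> [|u] ne_uv; first by rewrite !subsize_root eq_size.
  have [le_u_cs|lt_cs_u] := leqP u.+1 (fsize cs).
    by rewrite !subsize_first ?eq_size //=; apply: other.
  by rewrite !subsize_rest ?eq_size.
- by rewrite !subsize_first ?eq_size.
have [_ bnd _] := subsize_nested lt_v.
move=> l; rewrite ![subsize _ v.+1]subsize_first ?eq_size //= => lt_l.
rewrite subsize_first; last lia.
by move=> reach; have := trim l.-1 ltac:(lia) ltac:(lia); lia.
Qed.

Lemma trimmed_at_rest v cs F F' :
  trimmed_at v F F' -> trimmed_at (v + (fsize cs).+1) (Node cs :: F) (Node cs :: F').
Proof.
move=> [other shrink trim].
have sub_v G : subsize (Node cs :: G) (v + (fsize cs).+1) = subsize G v.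
  by rewrite subsize_rest ?addnK //; lia.
split; rewrite ?sub_v //.
- move=> u ne_uv; have [le_u_cs|lt_cs_u] := leqP u (fsize cs).
    have [->|u_gt0] := posnP u; first by rewrite !subsize_root.
    by rewrite !subsize_first //; lia.
  by rewrite !subsize_rest // other //; apply: contraNneq ne_uv => <-; rewrite subnK.
move=> l lt_l; rewrite subsize_rest; last lia.
by move=> reach; have := trim (l - (fsize cs).+1) ltac:(lia) ltac:(lia); lia.
Qed.

Lemma trimmed_at_op v F : trimmed_at v F (op v F).
Proof.
elim/forest_ind: F v => [|cs F IHcs IHF] v.
  by split=> // l; rewrite /subsize nth_nil; lia.
have [->|v_gt0] := posnP v; first by rewrite op_cons_root; apply: trimmed_at_root.
have [le_v_cs|lt_cs_v] := leqP v (fsize cs).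
  rewrite op_cons_first ?v_gt0 // -(prednK v_gt0).
  by apply: trimmed_at_first; [lia | exact: fsize_op | exact: IHcs].
rewrite op_cons_rest // -{1}(subnK lt_cs_v).
exact: trimmed_at_rest.
Qed.

(** * Moves starting from the path *)

Lemma op_seq_rcons L v F : op_seq (rcons L v) F = op v (op_seq L F).
Proof. exact: foldl_rcons. Qed.

Lemma subsize_op_seq_notin L F u :
  u \notin L -> subsize (op_seq L F) u = subsize F u.
Proof.
elim: L F => //= v L IH F; rewrite inE negb_or => /andP [ne_uv uL].
by rewrite IH //; case: (trimmed_at_op v F) => + _ _; apply.
Qed.

Lemma tsize_chain k : tsize (chain k) = k.+1.
Proof. by elim: k => //= k IH; rewrite addn0 IH. Qed.

Lemma nth_tsizes_chain k i : nth 0 (tsizes (chain k)) i = k.+1 - i.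
Proof.
elim: k i => [|k IH] [|i] //=; first by rewrite nth_nil.
  by rewrite addn0 tsize_chain.
by rewrite cats0 IH; lia.
Qed.

Lemma subsize_hat1 n u : subsize (hat1 n) u = n - u.
Proof.
case: n => [|n]; first by rewrite /subsize nth_nil.
by rewrite /subsize /hat1 fsizes_cons cats0 nth_tsizes_chain.
Qed.

Lemma op_seq_hat1_between n k l L : l < n ->
  (forall P Q, L = P ++ l :: Q -> forall i, k < i < l -> i \in P) ->
  forall i, k < i < l -> i \in L -> i + subsize (op_seq L (hat1 n)) i <= l.
Proof.
move=> lt_ln; elim/last_ind: L => [//|L x IH] l_after i lt_i.
have {}IH : i \in L -> i + subsize (op_seq L (hat1 n)) i <= l.
  apply: IH lt_i => P Q eq_L; apply: (l_after P (rcons Q x)).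
  by rewrite eq_L rcons_cat.
rewrite op_seq_rcons; have [other shrink trim] := trimmed_at_op x (op_seq L (hat1 n)).
have [eq_ix _|ne_ix] := eqVneq i x; last first.
  by rewrite mem_rcons inE (negbTE ne_ix) /= => iL; rewrite other ?IH.
subst x; have [iL|iNL] := boolP (i \in L); first by have := IH iL; lia.
have lNL : l \notin L.
  apply: contra iNL => lL; case/splitPr eq_L: {1}L / lL => [P Q].
  have := l_after P (rcons Q i); rewrite eq_L rcons_cat => /(_ erefl i lt_i).
  by rewrite mem_cat => ->.
have := trim l; rewrite !subsize_op_seq_notin // !subsize_hat1; lia.
Qed.

Lemma is_child_op_seq_hat1 n k l L : k < l < n -> k \notin L -> l \in L ->
  (forall P Q, L = P ++ l :: Q -> forall i, k < i < l -> i \in P) ->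
  is_child (op_seq L (hat1 n)) k l.
Proof.
move=> /andP [lt_kl lt_ln] kNL lL l_after; apply/is_childP; split.
  by rewrite subsize_op_seq_notin // subsize_hat1; lia.
move=> w lt_w; apply: (op_seq_hat1_between lt_ln l_after lt_w).
by case/splitPr: lL l_after => P Q /(_ P Q erefl w lt_w); rewrite mem_cat => ->.
Qed.

Lemma run_op_seq n (Ss : seq {set 'I_n}) F :
  run Ss F = op_seq (flatten [seq labels A | A <- Ss]) F.
Proof. by elim: Ss F => [|A Ss IH] F //=; rewrite IH /op_seq foldl_cat. Qed.

Lemma mem_flatten_labels n (Ss : seq {set 'I_n}) (i : 'I_n) :
  (val i \in flatten [seq labels A | A <- Ss]) = has (fun A : {set 'I_n} => i \in A) Ss.
Proof.
apply/flatten_mapP/hasP => [[A ASs]|[A ASs iA]]; first by rewrite mem_labels; exists A.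
by exists A; rewrite ?mem_labels.
Qed.

Lemma mem_flatten_labels_take n (Ss : seq {set 'I_n}) h (i : 'I_n) :
  h <= size Ss -> (val i \in flatten [seq labels A | A <- take h Ss]) = (hit Ss i <= h).
Proof. by move=> le_h; rewrite mem_flatten_labels has_take_leq. Qed.

Lemma mem_nth_hit n (Ss : seq {set 'I_n}) (i : 'I_n) :
  hit Ss i <= size Ss -> i \in nth set0 Ss (hit Ss i).-1.
Proof.
move=> le_hit; have has_i : has (fun A : {set 'I_n} => i \in A) Ss by rewrite has_find.
exact: nth_find has_i.
Qed.

Lemma cat_cons_eq_cat (T : eqType) (P Q L1 L2 : seq T) x : x \notin L1 ->
  P ++ x :: Q = L1 ++ L2 -> exists2 P2, P = L1 ++ P2 & L2 = P2 ++ x :: Q.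
Proof.
elim: L1 P => [|a L1 IH] P; first by exists P.
rewrite inE negb_or => /andP [ne_xa xNL1].
case: P => [[eq_xa]|b P [-> /(IH _ xNL1) [P2 -> ->]]]; last by exists P2.
by rewrite eq_xa eqxx in ne_xa.
Qed.

Lemma mem_sorted_cat_cons (P Q : seq nat) x y :
  sorted leq (P ++ x :: Q) -> y < x -> y \in P ++ x :: Q -> y \in P.
Proof.
rewrite sorted_cat_cons mem_cat inE => /andP [_ /(order_path_min leq_trans) /allP geQ].
by move=> lt_yx /or3P [//|/eqP eq_yx|/geQ]; [lia | rewrite leqNgt lt_yx].
Qed.

Lemma is_child_run_hat1 n (Ss : seq {set 'I_n}) (k l : 'I_n) :
  k < l -> hit Ss l <= size Ss -> hit Ss l < hit Ss k ->
  (forall i : 'I_n, k < i < l -> hit Ss i <= hit Ss l) ->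
  is_child (run (take (hit Ss l) Ss) (hat1 n)) k l.
Proof.
move=> lt_kl l_hit k_hit between.
have [j hit_l] : exists j, hit Ss l = j.+1 by exists (hit Ss l).-1.
have lt_j : j < size Ss by rewrite -hit_l.
rewrite hit_l (take_nth set0 lt_j) run_op_seq map_rcons flatten_rcons.
set L1 := flatten _; set L2 := labels _.
have L1_hit (i : 'I_n) : (val i \in L1) = (hit Ss i <= j).
  exact: mem_flatten_labels_take (ltnW lt_j).
have L2_hit (i : 'I_n) : hit Ss i = j.+1 -> val i \in L2.
  by move=> hit_i; rewrite mem_labels -[j]/(j.+1.-1) -hit_i mem_nth_hit // hit_i.
apply: is_child_op_seq_hat1.
- by rewrite lt_kl ltn_ord.
- by rewrite -flatten_rcons -map_rcons -take_nth // mem_flatten_labels_take; lia.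
- by rewrite mem_cat L2_hit ?orbT.
move=> P Q eq_L i lt_i; have lt_in : i < n by have := ltn_ord l; lia.
have lNL1 : val l \notin L1 by rewrite L1_hit hit_l ltnn.
have [P2 -> eq_L2] := cat_cons_eq_cat lNL1 (esym eq_L).
have := between (Ordinal lt_in) lt_i; rewrite hit_l mem_cat leq_eqVlt ltnS.
case/orP=> [/eqP/L2_hit iL2|/= i_early]; last first.
  by rewrite -[i]/(val (Ordinal lt_in)) L1_hit i_early.
apply/orP; right; apply: (@mem_sorted_cat_cons P2 Q l); rewrite -?eq_L2 //.
  exact: sorted_labels.
by case/andP: lt_i.
Qed.

Lemma desc_interval F v : v < fsize F ->
  exists k, forall u, desc F v u <-> v <= u < v + k.
Proof. by move=> lt_v; exists (subsize F v) => u; apply: desc_subsize. Qed.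

Theorem proposition4p9 :
  (* (a) *)
  (forall (F : forest) (v : nat), v < fsize F ->
     exists k : nat, forall u : nat, desc F v u <-> v <= u < v + k)
  /\
  (* (b) ; 1-based labels [m, n] = 0-based labels >= m - 1 *)
  (forall (R : realFieldType) (p : R) (n m : nat) (F G G' : forest),
     (0 < p <= 1)%R -> 1 <= m <= n -> fsize F = n ->
     G = restr m.-1 F -> fsize G' = n - m + 1 ->
     ungar_prob n p F (fun F' => restr m.-1 F' == G')
     = ungar_prob (n - m + 1) p G (fun G2 => G2 == G'))
  /\
  (* (c) *)
  (forall (n : nat) (Ss : seq {set 'I_n}) (k l : 'I_n),
     k < l -> hit Ss l <= size Ss -> hit Ss l < hit Ss k ->
     (forall i : 'I_n, k < i < l -> hit Ss i <= hit Ss l) ->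
     is_child (run (take (hit Ss l) Ss) (hat1 n)) k l).
Proof.
split; first exact: desc_interval.
split; last exact: is_child_run_hat1.
move=> R p n m F _ G' _ m_in _ -> _.
rewrite {1}(_ : n = m.-1 + (n - m + 1)); last lia.
exact: (ungar_prob_restr p m.-1 (n - m + 1) F (fun G2 => G2 == G')).
Qed.
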